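(* Let $A\in\mathbb{R}^{m\times n}_{\geq 0}$ have every column nonzero, let $\mu>0$, and define $f_\mu(x)=\vec{1}^Tx+\mu\sum_{j=1}^m\exp\!\big(\tfrac{1}{\mu}(1-(Ax)_j)\big)$ and $L=4/\mu$. Let $\Delta=\{x\in\mathbb{R}^n: 0\leq x_i\leq 3/\|A_{:i}\|_\infty \ \forall i\}$. Then for any $x\in\Delta$ and $i\in[n]$: (1) if $\nabla_i f_\mu(x)\in(-1,1)$, then for all $\gamma$ with $|\gamma|\leq \frac{1}{L\|A_{:i}\|_\infty}$, $$|\nabla_i f_\mu(x)-\nabla_i f_\mu(x+\gamma e_i)|\leq L\|A_{:i}\|_\infty|\gamma|;$$ (2) if $\nabla_i f_\mu(x)\leq -1$, then for all $\gamma\leq\frac{1}{L\|A_{:i}\|_\infty}$, $$\nabla_i f_\mu(x+\gamma e_i)\leq \Big(1-\frac{L\|A_{:i}\|_\infty}{2}|\gamma|\Big)\nabla_i f_\mu(x).$$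
   Context: $A_{:i}$ denotes the $i$-th column of $A$, $\|A_{:i}\|_\infty$ its largest entry, $e_i$ the $i$-th standard basis vector, $\vec 1$ the all-ones vector, and $\nabla_i f_\mu$ the $i$-th partial derivative of $f_\mu$; explicitly $\nabla_i f_\mu(x)=1-\sum_j A_{ji}\exp(\frac1\mu(1-(Ax)_j))$. *)

From mathcomp Require Import all_boot all_order all_algebra.
From mathcomp Require Import all_classical all_reals all_analysis.
Set Implicit Arguments. Unset Strict Implicit. Unset Printing Implicit Defensive.
Import Order.TTheory GRing.Theory Num.Theory.
Local Open Scope ring_scope.

Section Defs.
Variables (R : realType) (m n : nat).

(* ||A_{:i}||_oo : largest entry of column i (A is entrywise nonnegative) *)
Definition colmax (A : 'M[R]_(m, n)) (i : 'I_n) : R :=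
  \big[Num.max/0]_(j < m) A j i.

Definition fmu (mu : R) (A : 'M[R]_(m, n)) (x : 'cV[R]_n) : R :=
  \sum_(i < n) x i 0 + mu * \sum_(j < m) expR ((1 - (A *m x) j 0) / mu).

(* i-th partial derivative of f_mu, as given explicitly in the paper *)
Definition grad (mu : R) (A : 'M[R]_(m, n)) (x : 'cV[R]_n) (i : 'I_n) : R :=
  1 - \sum_(j < m) A j i * expR ((1 - (A *m x) j 0) / mu).

Definition inDelta (A : 'M[R]_(m, n)) (x : 'cV[R]_n) : Prop :=
  forall i : 'I_n, 0 <= x i 0 <= 3 / colmax A i.
End Defs.

From mathcomp Require Import all_boot all_order all_algebra.
From mathcomp Require Import all_classical all_reals all_analysis.
From mathcomp Require Import ring lra.
Set Implicit Arguments. Unset Strict Implicit. Unset Printing Implicit Defensive.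
Import Order.TTheory GRing.Theory Num.Theory.
Local Open Scope ring_scope.

(* Write grad_i f_mu(x) = 1 - S with S the sum of the weights
   A_ji exp((1 - (Ax)_j)/mu).  Moving x along e_i by gamma multiplies the j-th
   weight by exp(-t A_ji), t := gamma/mu, where 0 <= A_ji <= c := ||A_{:i}||_oo.
   From 1 + s <= exp s and |exp s - 1| <= 2|s| for |s| <= 1/2, the new sum S'
   satisfies |S' - S| <= 2|t|c S, S' >= (1 - tc) S for t >= 0 and S' >= S for
   t <= 0.  Part (1) follows since S < 2, part (2) since S >= 2. *)

Lemma norm_expR_sub1_le {R : realType} {t : R} :
  `|t| <= 1 / 2 -> `|expR t - 1| <= 2 * `|t|.
Proof.
move=> t_small; have expR_ge1D := expR_ge1Dx t.
have [t_ge0 | t_lt0] := lerP 0 t.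
- have expR_le : expR t * (1 - t) <= 1.
    rewrite -[leRHS](mulfV (lt0r_neq0 (expR_gt0 t))) -expRN ler_pM2l ?expR_gt0 //.
    exact: expR_ge1Dx.
  move: t_small; rewrite !ger0_norm ?subr_ge0 //; [nra | lra].
- have expR_lt1 : expR t < 1 by rewrite -expR0 ltr_expR.
  by rewrite !ltr0_norm ?subr_lt0 //; lra.
Qed.

Section ShiftedExponentialSum.
Variables (R : realType) (m : nat) (w a : 'I_m -> R) (c : R).
Hypotheses (w_ge0 : forall j, 0 <= w j) (a_ge0 : forall j, 0 <= a j)
  (a_le : forall j, a j <= c) (c_ge0 : 0 <= c).

Let S := \sum_(j < m) w j.
Let shifted (t : R) := \sum_(j < m) w j * expR (- (t * a j)).

Lemma shifted_sum_ge_nonpos t : t <= 0 -> S <= shifted t.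
Proof.
move=> t_le0; apply: ler_sum => j _; rewrite -[leLHS]mulr1.
rewrite ler_wpM2l // -expR0 ler_expR oppr_ge0 mulr_le0_ge0 //.
Qed.

Lemma shifted_sum_ge_nonneg t : 0 <= t -> (1 - t * c) * S <= shifted t.
Proof.
move=> t_ge0; rewrite mulr_sumr; apply: ler_sum => j _.
rewrite mulrC ler_wpM2l //; apply: le_trans (expR_ge1Dx _).
by rewrite lerD2l lerN2 ler_wpM2l.
Qed.

Lemma norm_shifted_sum_sub t :
  `|t| * c <= 1 / 2 -> `|shifted t - S| <= 2 * (`|t| * c) * S.
Proof.
move=> t_small; rewrite /shifted /S -sumrB mulr_sumr.
apply: le_trans (ler_norm_sum _ _ _) _; apply: ler_sum => j _.
have ta_le : `|- (t * a j)| <= `|t| * c.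
  by rewrite normrN normrM (ger0_norm (a_ge0 j)) ler_wpM2l.
rewrite -{2}[w j]mulr1 -mulrBr normrM ger0_norm // mulrC ler_wpM2r //.
have := norm_expR_sub1_le (le_trans ta_le t_small); lra.
Qed.

Lemma shifted_grad_near t :
  S < 2 -> `|t| * c <= 1 / 2 -> `|(1 - S) - (1 - shifted t)| <= 4 * (`|t| * c).
Proof.
move=> S_lt2 t_small; have S_ge0 : 0 <= S by exact: sumr_ge0.
have k_ge0 : 0 <= `|t| * c by rewrite mulr_ge0.
have -> : 1 - S - (1 - shifted t) = shifted t - S by ring.
apply: le_trans (norm_shifted_sum_sub t_small) _; nra.
Qed.

Lemma shifted_grad_descent t :
  2 <= S -> 1 - shifted t <= (1 - 2 * (`|t| * c)) * (1 - S).
Proof.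
move=> S_ge2; have [t_ge0 | t_lt0] := lerP 0 t.
- have := shifted_sum_ge_nonneg t_ge0; have := mulr_ge0 t_ge0 c_ge0.
  rewrite ger0_norm //; nra.
- have := shifted_sum_ge_nonpos (ltW t_lt0); have := mulr_le0_ge0 (ltW t_lt0) c_ge0.
  rewrite ltr0_norm //; nra.
Qed.

End ShiftedExponentialSum.

Lemma colmax_ge {R : realType} {m n} (A : 'M[R]_(m, n)) i j : A j i <= colmax A i.
Proof. exact: (le_bigmax _ (fun j => A j i) j). Qed.

Lemma colmax_gt0 {R : realType} {m n} (A : 'M[R]_(m, n)) i :
  (forall j, 0 <= A j i) -> (exists j, A j i != 0) -> 0 < colmax A i.
Proof.
move=> A_ge0 [j Aji_neq0]; apply: lt_le_trans (colmax_ge A i j).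
by rewrite lt_def Aji_neq0 A_ge0.
Qed.

Definition grad_weight {R : realType} {m n} (mu : R) (A : 'M[R]_(m, n))
    (x : 'cV[R]_n) (i : 'I_n) (j : 'I_m) : R :=
  A j i * expR ((1 - (A *m x) j 0) / mu).

Lemma gradE {R : realType} {m n} (mu : R) (A : 'M[R]_(m, n)) x i :
  grad mu A x i = 1 - \sum_(j < m) grad_weight mu A x i j.
Proof. by []. Qed.

Lemma grad_shift {R : realType} {m n} (mu : R) (A : 'M[R]_(m, n)) x i (g : R) :
  grad mu A (x + g *: delta_mx i 0) i =
  1 - \sum_(j < m) grad_weight mu A x i j * expR (- (g / mu * A j i)).
Proof.
rewrite /grad; congr (_ - _); apply: eq_bigr => j _.
rewrite /grad_weight mulmxDr -scalemxAr -colE !mxE -mulrA -expRD; congr (_ * expR _); ring.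
Qed.

Theorem lemma5 (R : realType) (m n : nat) (A : 'M[R]_(m, n)) (mu : R) :
  (forall (j : 'I_m) (i : 'I_n), 0 <= A j i) ->
  (forall i : 'I_n, exists j : 'I_m, A j i != 0) ->
  0 < mu ->
  let L := 4 / mu in
  forall x : 'cV[R]_n, inDelta A x ->
  forall i : 'I_n,
    (-1 < grad mu A x i < 1 ->
      forall gamma : R, `|gamma| <= 1 / (L * colmax A i) ->
        `|grad mu A x i - grad mu A (x + gamma *: delta_mx i 0) i|
          <= L * colmax A i * `|gamma|) /\
    (grad mu A x i <= -1 ->
      forall gamma : R, gamma <= 1 / (L * colmax A i) ->
        grad mu A (x + gamma *: delta_mx i 0) i
          <= (1 - L * colmax A i / 2 * `|gamma|) * grad mu A x i).
Proof.
move=> A_ge0 A_col mu_gt0 L x _ i.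
have c_gt0 : 0 < colmax A i by exact: colmax_gt0.
set c := colmax A i in c_gt0 *.
have w_ge0 j : 0 <= grad_weight mu A x i j by rewrite mulr_ge0 ?expR_ge0.
have a_ge0 j : 0 <= A j i by [].
have a_le j : A j i <= c by exact: colmax_ge.
rewrite gradE.
have gamma_le_iff gamma : (gamma <= 1 / (L * c)) = (gamma / mu * c <= 1 / 4).
  have -> : 1 / (L * c) = mu / 4 / c by rewrite /L; field; lra.
  by rewrite ler_pdivlMr // mulrAC ler_pdivrMr // [_ * mu]mulrC mul1r.
have norm_div_mu gamma : `|gamma / mu| = `|gamma| / mu.
  by rewrite normrM normfV (gtr0_norm mu_gt0).
have Lc_normE gamma : L * c * `|gamma| = 4 * (`|gamma / mu| * c).
  by rewrite norm_div_mu /L; field; lra.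
split=> [/andP[grad_gtN1 _] | grad_leN1] gamma gamma_le; rewrite grad_shift.
- rewrite Lc_normE.
  apply: (shifted_grad_near (t := gamma / mu) w_ge0 a_ge0 a_le (ltW c_gt0)).
    by lra.
  by move: gamma_le; rewrite gamma_le_iff -norm_div_mu; lra.
- have -> : L * c / 2 * `|gamma| = 2 * (`|gamma / mu| * c).
    by rewrite mulrAC Lc_normE; field.
  by apply: (shifted_grad_descent w_ge0 a_ge0 a_le (ltW c_gt0) (gamma / mu)); lra.
Qed.
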